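(* Let $i,j,k$ be integers with $i\ge j\ge 0$ and $k\ge 1-j$. Then (a) $\displaystyle\sum_{r=j}^{i}(-1)^{i-r}\binom{r+k-1}{r-j}\,b_{i,r,k}=b_{i,j,0}$; (b) $\displaystyle\sum_{r=j}^{i}(-1)^{i-r}\binom{r+k-1}{r-j}\,b_{i,r,0}=b_{i,j,k}$.
   Context: For integers $i\ge0$, $j\ge0$ and real $k$, $b_{i,j,k}=\sum_{r=0}^{j}\binom{j}{r}(-1)^{j-r}(r+k)^i$, with the convention $0^0=1$. *)

From mathcomp Require Import all_boot all_order all_algebra.
Set Implicit Arguments. Unset Strict Implicit. Unset Printing Implicit Defensive.
Import Order.TTheory GRing.Theory Num.Theory.
Local Open Scope ring_scope.

(* b_{i,j,k} = sum_{r=0}^{j} C(j,r) (-1)^{j-r} (r+k)^i, evaluated at an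
   integer k (the theorem only uses integer k).  The convention 0^0 = 1 is
   built into MathComp's [x ^+ 0 = 1]. *)
Definition b (i j : nat) (k : int) : int :=
  \sum_(0 <= r < j.+1) ('C(j, r))%:Z * (-1) ^+ (j - r)%N * (r%:Z + k) ^+ i.

From mathcomp Require Import all_boot all_order all_algebra.
From mathcomp Require Import zify ring.
Import Order.TTheory GRing.Theory Num.Theory.
Local Open Scope ring_scope.

(* With Δh(y) = h(y+1) - h(y) we have b_{i,j,k} = (Δ^j x^i)(k).  Writing the
   shift as E = 1 + Δ, its inverse power E^{-(n+1)} expands as
   Σ_m (-1)^m C(m+n, m) Δ^m, a finite sum on polynomials; since
   C(r+k-1, r-j) = C(m+n, m) for m = r - j and n = j + k - 1, the left-hand
   sides of (a) and (b) are ±(E^{-(n+1)} Δ^j x^i) evaluated at k and at 0,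
   i.e. ±(Δ^j x^i)(-j) and ±(Δ^j x^i)(-j-k).  The reflection
   b_{i,j,-j-k} = (-1)^{i+j} b_{i,j,k} then gives both identities. *)

Lemma signrB {R : pzRingType} {m n : nat} :
  (m <= n)%N -> (-1) ^+ (n - m) = (-1) ^+ n * (-1) ^+ m :> R.
Proof. by move=> le_mn; rewrite -signr_odd oddB // signr_addb !signr_odd. Qed.

Section FiniteDifferences.

Context {R : comPzRingType}.
Implicit Types (g h : int -> R) (y : int).

Definition fdiff h : int -> R := fun y => h (y + 1) - h y.

Definition fdiffn n h := iter n fdiff h.

Lemma fdiffnS n h : fdiffn n.+1 h = fdiff (fdiffn n h).
Proof. by []. Qed.

Lemma fdiffnSr n h : fdiffn n.+1 h = fdiffn n (fdiff h).
Proof. exact: iterSr. Qed.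

Lemma fdiffnD m n h : fdiffn (m + n) h = fdiffn m (fdiffn n h).
Proof. exact: iterD. Qed.

Lemma fdiffn_addr1 n h y : fdiffn n h (y + 1) = fdiffn n h y + fdiffn n (fdiff h) y.
Proof. by rewrite -fdiffnSr fdiffnS /fdiff addrCA subrr addr0. Qed.

Lemma fdiffnE n h y :
  fdiffn n h y = \sum_(r < n.+1) (-1) ^+ (n - r) * 'C(n, r)%:R * h (y + r%:Z).
Proof.
elim: n y => [|n IHn] y; first by rewrite big_ord_recl big_ord0 expr0 !mul1r !addr0.
rewrite fdiffnS /fdiff !IHn.
rewrite [RHS]big_ord_recl /= subn0 bin0 mulr1.
under [in RHS]eq_bigr => s _ do rewrite /bump /= add1n binS natrD mulrDr mulrDl.
rewrite big_split /= [X in _ = _ + X]addrC addrCA; congr (_ + _).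
  apply: eq_bigr => s _; rewrite subSS; congr (_ * h _).
  by rewrite -[s.+1]addn1 PoszD addrAC addrA.
rewrite [in RHS]big_ord_recr /= bin_small // mulr0 mul0r !addr0.
rewrite big_ord_recl /= subn0 bin0 mulr1 !addr0 opprD exprS mulN1r mulNr.
congr (_ + _); rewrite -sumrN; apply: eq_bigr => s _.
by rewrite /bump add1n subSS -(subnSK (ltn_ord s)) exprS mulN1r !mulNr.
Qed.

Lemma eq_fdiffn n g h : g =1 h -> fdiffn n g =1 fdiffn n h.
Proof. by move=> eq_gh y; rewrite !fdiffnE; apply: eq_bigr => r _; rewrite eq_gh. Qed.

Lemma fdiffn_sum n m (F : 'I_m -> int -> R) y :
  fdiffn n (fun x => \sum_(l < m) F l x) y = \sum_(l < m) fdiffn n (F l) y.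
Proof.
rewrite fdiffnE; under eq_bigr do rewrite mulr_sumr.
by rewrite exchange_big; apply: eq_bigr => l _; rewrite fdiffnE.
Qed.

Lemma fdiffn_mulrn n c h y : fdiffn n (fun x => h x *+ c) y = fdiffn n h y *+ c.
Proof. by rewrite !fdiffnE -sumrMnl; apply: eq_bigr => r _; rewrite -mulrnAr. Qed.

Lemma fdiffn_exp_eq0 i n y :
  (i < n)%N -> fdiffn n (fun x => x%:~R ^+ i) y = 0.
Proof.
elim/ltn_ind: i n y => i IHi [|n] // y lt_in.
rewrite fdiffnSr.
rewrite (@eq_fdiffn _ _ (fun x => \sum_(l < i) x%:~R ^+ l *+ 'C(i, l))); last first.
  by move=> x; rewrite /fdiff intrD exprD1n big_ord_recr /= binn mulr1n addrK.
rewrite fdiffn_sum big1 // => l _; rewrite fdiffn_mulrn IHi ?mul0rn //.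
by have := ltn_ord l; lia.
Qed.

(* The series (1 + fdiff)^-(n+1) = Σ_m (-1)^m C(m+n, m) fdiff^m, truncated
   after M terms; on g with fdiffn M g = 0 it is exactly the shift by -(n+1). *)
Definition shiftV_series n M g y :=
  \sum_(m < M) (-1) ^+ m * 'C(m + n, m)%:R * fdiffn m g y.

Lemma shiftV_series_succ n M g y :
  shiftV_series n M g (y + 1) = shiftV_series n M g y + shiftV_series n M (fdiff g) y.
Proof.
rewrite /shiftV_series -big_split; apply: eq_bigr => m _ /=.
by rewrite fdiffn_addr1 mulrDr.
Qed.

Section Polynomial.

Variables (M : nat) (g : int -> R).
Hypothesis fdiffn_g : forall y, fdiffn M.+1 g y = 0.

Lemma shiftV_series_pascal n y :
  shiftV_series n.+1 M.+1 g y + shiftV_series n.+1 M.+1 (fdiff g) y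
    = shiftV_series n M.+1 g y.
Proof.
rewrite /shiftV_series big_ord_recl [X in _ + X]big_ord_recr [RHS]big_ord_recl /=.
rewrite -fdiffnSr fdiffn_g mulr0 addr0 !bin0 -addrA; congr (_ + _).
rewrite -big_split; apply: eq_bigr => s _ /=.
rewrite /bump !add0n add1n addSn binS -fdiffnSr -fdiffnS.
by rewrite addSnnS natrD exprS; ring.
Qed.

Lemma shiftV_series0_succ y : shiftV_series 0 M.+1 g (y + 1) = g y.
Proof.
rewrite shiftV_series_succ /shiftV_series big_ord_recl [X in _ + X]big_ord_recr /=.
rewrite -fdiffnSr fdiffn_g mulr0 addr0 bin0 expr0 !mul1r -addrA addrC.
rewrite -[RHS]add0r; congr (_ + _).
rewrite -big_split big1 // => s _ /=.
rewrite /bump !add0n add1n !addn0 !binn -fdiffnSr -fdiffnS.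
by rewrite exprS; ring.
Qed.

End Polynomial.

Lemma shiftV_seriesK M n g :
  (forall y, fdiffn M.+1 g y = 0) ->
  forall x, shiftV_series n M.+1 g (x + n%:Z + 1) = g x.
Proof.
elim: n g => [|n IHn] g fdiffn_g x; first by rewrite addr0 shiftV_series0_succ.
have fdiffn_Dg y : fdiffn M.+1 (fdiff g) y = 0.
  by have := fdiffn_addr1 M.+1 g y; rewrite !fdiffn_g add0r => <-.
rewrite -addn1 PoszD addrA shiftV_series_succ addn1 shiftV_series_pascal //.
exact: IHn.
Qed.

End FiniteDifferences.

Lemma b_fdiffn i j k : b i j k = fdiffn j (fun x : int => x ^+ i) k.
Proof. by rewrite fdiffnE /b big_mkord; apply: eq_bigr => r _; rewrite addrC; ring. Qed.

Lemma b_reflect i j k : b i j (- j%:Z - k) = (-1) ^+ (i + j) * b i j k.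
Proof.
rewrite /b !big_mkord (reindex_inj rev_ord_inj) /= mulr_sumr; apply: eq_bigr => s _.
rewrite subSS bin_sub ?leq_ord // subKn ?leq_ord // -subzn ?leq_ord //.
rewrite (_ : j%:Z - s%:Z + (- j%:Z - k) = - (s%:Z + k)); last by ring.
by rewrite (signrB (leq_ord s)) (exprNn (s%:Z + k)) exprD -[LHS]mul1r -{1}(sqrr_sign int j); ring.
Qed.

Lemma shiftV_series_b i j n x : (j <= i)%N ->
  shiftV_series n (i - j).+1 (fdiffn j (fun y : int => y ^+ i)) (x + n%:Z + 1)
    = b i j x.
Proof.
move=> le_ji; rewrite b_fdiffn shiftV_seriesK // => y.
rewrite -fdiffnD addSn subnK //.
by rewrite (@eq_fdiffn _ _ _ (fun x => x%:~R ^+ i)) ?fdiffn_exp_eq0 // => x'; rewrite intz.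
Qed.

Lemma sum_b_shiftV_series i j k (y : int) : (j <= i)%N -> 1 - j%:Z <= k ->
  \sum_(j <= r < i.+1)
      (-1) ^+ (i - r)%N * (binomial (absz (r%:Z + k - 1)%R) (r - j)%N)%:Z * b i r y
    = (-1) ^+ (i + j) * shiftV_series (absz (j%:Z + k - 1)%R)
                          (i - j).+1 (fdiffn j (fun x : int => x ^+ i)) y.
Proof.
move=> le_ji hk.
rewrite -{1}(add0n j) big_addn subSn // big_mkord mulr_sumr.
apply: eq_bigr => m _; rewrite addnK.
have -> : absz ((m + j)%N%:Z + k - 1)%R = (m + absz (j%:Z + k - 1)%R)%N by lia.
rewrite b_fdiffn fdiffnD subnDA subnAC.
by rewrite (signrB (leq_ord m)) (signrB le_ji) exprD; ring.
Qed.

Theorem mainTheorem13 (i j : nat) (k : int)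
    (hij : (j <= i)%N) (hk : 1 - j%:Z <= k) :
  (\sum_(j <= r < i.+1)
      (-1) ^+ (i - r)%N * (binomial (absz (r%:Z + k - 1)%R) (r - j)%N)%:Z * b i r k
    = b i j 0)
  /\
  (\sum_(j <= r < i.+1)
      (-1) ^+ (i - r)%N * (binomial (absz (r%:Z + k - 1)%R) (r - j)%N)%:Z * b i r 0
    = b i j k).
Proof.
rewrite !sum_b_shiftV_series //.
set n := absz (j%:Z + k - 1)%R.
have hn : n%:Z = j%:Z + k - 1 by rewrite /n; lia.
split.
- rewrite [in X in shiftV_series _ _ _ X](_ : k = - j%:Z + n%:Z + 1); last by rewrite hn; ring.
  by rewrite shiftV_series_b // -[- j%:Z]subr0 b_reflect signrMK.
- rewrite (_ : 0 = - j%:Z - k + n%:Z + 1); last by rewrite hn; ring.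
  by rewrite shiftV_series_b // b_reflect signrMK.
Qed.
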